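(* Let $(M,d)$ be a metric space in which any two points $A,B\in M$ are joined by a unique metric segment $[A,B]$. Then $(M,d)$ is an $\mathbb R$-tree if and only if the following Condition (A) holds: for any three distinct points $A,B,C\in M$ there exists a unique $O\in M$ such that $\{X,Y\}\subset\mathcal C_d(Z,O)$ for all distinct $X,Y,Z\in\{A,B,C\}$.
   Context: For a metric space $(M,d)$ and $A,B\in M$, the metric segment is $[A,B]=\{X\in M:\ d(A,X)+d(X,B)=d(A,B)<+\infty\}$, and $\mathcal C_d(A,B)=\{X\in M:\ d(X,A)=d(X,B)+d(A,B)<+\infty\}$. An $\mathbb R$-tree is a nonempty metric space $(M,d)$ such that: (a) any two points $A,B\in M$ are joined by a unique metric segment $[A,B]$; (b) for all $A,B,C\in M$, $[A,B]\cap[A,C]=[A,O]$ for some $O\in M$; (c) if $A,B,C\in M$ and $[A,B]\cap[B,C]=\{B\}$, then $[A,B]\cup[B,C]=[A,C]$. *)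

From Stdlib Require Import Reals.
Open Scope R_scope.

Section RTree.
Context {M : Type} (d : M -> M -> R).

Definition is_metric : Prop :=
  (forall x y, d x y = 0 <-> x = y) /\
  (forall x y, d x y = d y x) /\
  (forall x y z, d x z <= d x y + d y z).

Definition segment (A B : M) (X : M) : Prop := d A X + d X B = d A B.

Definition Cset (A B : M) (X : M) : Prop := d X A = d X B + d A B.

Definition is_metric_segment_joining (A B : M) (S : M -> Prop) : Prop :=
  exists f : R -> M,
    f 0 = A /\ f (d A B) = B /\
    (forall s t, 0 <= s <= d A B -> 0 <= t <= d A B ->
                 d (f s) (f t) = Rabs (s - t)) /\
    (forall X, S X <-> exists t, 0 <= t <= d A B /\ f t = X).

Definition unique_segments : Prop :=
  forall A B : M,
    is_metric_segment_joining A B (segment A B) /\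
    (forall S, is_metric_segment_joining A B S ->
               forall X, S X <-> segment A B X).

Definition is_R_tree : Prop :=
  inhabited M /\
  unique_segments /\
  (forall A B C : M, exists O : M,
     forall X, (segment A B X /\ segment A C X) <-> segment A O X) /\
  (forall A B C : M,
     (forall X, (segment A B X /\ segment B C X) <-> X = B) ->
     forall X, (segment A B X \/ segment B C X) <-> segment A C X).

Definition conditionA : Prop :=
  forall A B C : M, A <> B -> B <> C -> A <> C ->
    exists! O : M,
      forall X Y Z : M,
        (X = A \/ X = B \/ X = C) ->
        (Y = A \/ Y = B \/ Y = C) ->
        (Z = A \/ Z = B \/ Z = C) ->
        X <> Y -> Y <> Z -> X <> Z ->
        Cset Z O X /\ Cset Z O Y.

End RTree.

(* Condition (A) says exactly that every triple of distinct points has a unique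
   median, a point lying on all three segments joining them.  When segments are
   unique, medians are automatically unique: a median O of A, B, C satisfies
   d(A,O) = (d(A,B) + d(A,C) - d(B,C)) / 2, and a point of [A,B] is determined
   by its distance from A.  In an R-tree the branch point O of
   [A,B] ∩ [A,C] = [A,O] lies on [B,C] by the gluing axiom (c), so it is a
   median.  Conversely, given medians, the points of [A,B] are linearly ordered
   by their distance from A and no common point of [A,B] and [A,C] can lie
   beyond the median O, whence [A,B] ∩ [A,C] = [A,O]; and the hypothesis of (c)
   forces B to be the median of A, B, C, which puts B on [A,C]. *)
From Stdlib Require Import Reals Lra Classical.
Open Scope R_scope.

Section MetricSegments.
Variable M : Type.
Variable d : M -> M -> R.
Hypothesis d_metric : is_metric d.

Lemma dist_xx x : d x x = 0.
Proof. destruct d_metric as [H _]. now apply H. Qed.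

Lemma dist_sym x y : d x y = d y x.
Proof. destruct d_metric as [_ [H _]]. apply H. Qed.

Lemma dist_triangle x y z : d x z <= d x y + d y z.
Proof. destruct d_metric as [_ [_ H]]. apply H. Qed.

Lemma dist_ge0 x y : 0 <= d x y.
Proof. pose proof (dist_triangle x y x). rewrite dist_xx, (dist_sym y x) in H. lra. Qed.

Lemma dist_eq0 x y : d x y = 0 -> x = y.
Proof. destruct d_metric as [H _]. apply H. Qed.

Lemma segment_sym A B X : segment d A B X -> segment d B A X.
Proof.
  unfold segment. rewrite (dist_sym B X), (dist_sym X A), (dist_sym B A). lra.
Qed.

Lemma segment_l A B : segment d A B A.
Proof. unfold segment. rewrite dist_xx. lra. Qed.

Lemma segment_r A B : segment d A B B.
Proof. unfold segment. rewrite dist_xx. lra. Qed.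

Lemma segment_sub A B X Y : segment d A B X -> segment d A X Y -> segment d A B Y.
Proof.
  unfold segment. intros H1 H2.
  pose proof (dist_triangle Y X B); pose proof (dist_triangle A Y B). lra.
Qed.

Lemma segment_concat A B C X :
  segment d A C B -> segment d A B X \/ segment d B C X -> segment d A C X.
Proof.
  intros HB [HX | HX].
  - exact (segment_sub A C B X HB HX).
  - apply segment_sym. apply (segment_sub C A B X); apply segment_sym; assumption.
Qed.

Lemma Cset_segment Z O X : Cset d Z O X <-> segment d X Z O.
Proof. unfold Cset, segment. rewrite (dist_sym Z O). lra. Qed.

Definition median (A B C O : M) : Prop :=
  segment d A B O /\ segment d B C O /\ segment d A C O.

Lemma median_dist A B C O : median A B C O -> d A O = (d A B + d A C - d B C) / 2.
Proof.
  unfold median, segment. rewrite (dist_sym O B). lra.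
Qed.

Lemma median_segment A B C O X Y :
  median A B C O ->
  (X = A \/ X = B \/ X = C) -> (Y = A \/ Y = B \/ Y = C) -> X <> Y ->
  segment d X Y O.
Proof.
  intros [HAB [HBC HAC]] hX hY nXY.
  destruct hX as [-> | [-> | ->]]; destruct hY as [-> | [-> | ->]];
    try congruence; auto using segment_sym.
Qed.

Lemma median_conditionA A B C O :
  A <> B -> B <> C -> A <> C ->
  median A B C O <->
  (forall X Y Z : M,
     (X = A \/ X = B \/ X = C) -> (Y = A \/ Y = B \/ Y = C) ->
     (Z = A \/ Z = B \/ Z = C) -> X <> Y -> Y <> Z -> X <> Z ->
     Cset d Z O X /\ Cset d Z O Y).
Proof.
  intros nAB nBC nAC. split.
  - intros HO X Y Z hX hY hZ nXY nYZ nXZ. rewrite !Cset_segment.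
    split; eapply median_segment; eauto.
  - intros HO.
    destruct (HO A B C) as [HAC HBC]; auto.
    destruct (HO A C B) as [HAB _]; auto.
    rewrite Cset_segment in HAC, HBC, HAB.
    repeat split; assumption.
Qed.

Lemma conditionA_iff_unique_medians :
  conditionA d <->
  (forall A B C : M, A <> B -> B <> C -> A <> C -> exists! O, median A B C O).
Proof.
  unfold conditionA. split; intros H A B C nAB nBC nAC;
    destruct (H A B C nAB nBC nAC) as [O [HO Huniq]]; exists O; split.
  - now apply median_conditionA.
  - intros O' HO'. apply Huniq. now apply median_conditionA.
  - now apply median_conditionA.
  - intros O' HO'. apply Huniq. now apply median_conditionA.
Qed.

Lemma median_of_pair_l A C : median A A C A.
Proof. repeat split; apply segment_l. Qed.

Lemma median_of_pair_r A B : median A B B B.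
Proof. repeat split; auto using segment_l, segment_r. Qed.

Lemma median_of_pair_m A B : median A B A A.
Proof. repeat split; auto using segment_l, segment_r. Qed.

Lemma medians_exist :
  (forall A B C : M, A <> B -> B <> C -> A <> C -> exists O, median A B C O) ->
  forall A B C : M, exists O, median A B C O.
Proof.
  intros H A B C.
  destruct (classic (A = B)) as [<- | nAB]; [exists A; apply median_of_pair_l |].
  destruct (classic (B = C)) as [<- | nBC]; [exists B; apply median_of_pair_r |].
  destruct (classic (A = C)) as [<- | nAC]; [exists A; apply median_of_pair_m |].
  now apply H.
Qed.

Definition segments_glue : Prop :=
  forall A B C : M,
    (forall X, (segment d A B X /\ segment d B C X) <-> X = B) ->
    forall X, (segment d A B X \/ segment d B C X) <-> segment d A C X.

Lemma branch_point_median A B C O :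
  segments_glue ->
  (forall X, (segment d A B X /\ segment d A C X) <-> segment d A O X) ->
  median A B C O.
Proof.
  intros Hglue HO.
  destruct (proj2 (HO O) (segment_r A O)) as [OAB OAC].
  assert (Hbranch : forall X, (segment d B O X /\ segment d O C X) <-> X = O).
  { intros X. split; [intros [XBO XOC] | intros ->; auto using segment_l, segment_r].
    assert (XAB : segment d A B X).
    { apply segment_sym, (segment_sub B A O X); auto using segment_sym. }
    assert (XAC : segment d A C X).
    { apply segment_sym, (segment_sub C A O X); auto using segment_sym. }
    pose proof (proj1 (HO X) (conj XAB XAC)) as XAO.
    pose proof (dist_triangle A X B); pose proof (dist_ge0 X O).
    pose proof (dist_sym X B); pose proof (dist_sym O B).
    unfold segment in *. apply dist_eq0. lra. }
  repeat split; auto.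
  apply (Hglue B O C Hbranch O). left. apply segment_r.
Qed.

Hypothesis d_unique_segments : unique_segments d.

Lemma isometry_dist_from_start A B (f : R -> M) s :
  f 0 = A ->
  (forall s t, 0 <= s <= d A B -> 0 <= t <= d A B -> d (f s) (f t) = Rabs (s - t)) ->
  0 <= s <= d A B -> d A (f s) = s.
Proof.
  intros f0 fiso Hs.
  assert (E : d (f 0) (f s) = Rabs (0 - s)) by (apply fiso; lra).
  rewrite f0 in E. rewrite E, Rabs_minus_sym, Rabs_right; lra.
Qed.

Lemma segment_eq_of_dist A B X Y :
  segment d A B X -> segment d A B Y -> d A X = d A Y -> X = Y.
Proof.
  destruct (d_unique_segments A B) as [[f [f0 [_ [fiso fseg]]]] _].
  intros HX HY Hd.
  apply fseg in HX as [s [Hs <-]]. apply fseg in HY as [t [Ht <-]].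
  rewrite (isometry_dist_from_start A B f s), (isometry_dist_from_start A B f t) in Hd; auto.
  now subst.
Qed.

Lemma segment_point_at A B t :
  0 <= t <= d A B -> exists P, segment d A B P /\ d A P = t.
Proof.
  destruct (d_unique_segments A B) as [[f [f0 [_ [fiso fseg]]]] _]. intros Ht.
  exists (f t). split.
  - apply fseg. now exists t.
  - now apply (isometry_dist_from_start A B f t).
Qed.

Lemma segment_ordered A B X Y :
  segment d A B X -> segment d A B Y -> d A X <= d A Y -> segment d A Y X.
Proof.
  intros HX HY Hle.
  destruct (segment_point_at A Y (d A X)) as [P [HP HdP]]; [split; auto using dist_ge0 |].
  now rewrite <- (segment_eq_of_dist A B P X (segment_sub A B Y P HY HP) HX HdP).
Qed.

Lemma segment_split A B C X :
  segment d A C B -> segment d A C X -> segment d A B X \/ segment d B C X.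
Proof.
  intros HB HX. destruct (Rle_dec (d A X) (d A B)) as [Hle | Hgt].
  - left. exact (segment_ordered A C X B HX HB Hle).
  - right. assert (HBX : segment d A X B) by (apply (segment_ordered A C B X); auto; lra).
    unfold segment in *. lra.
Qed.

Lemma median_unique A B C O O' : median A B C O -> median A B C O' -> O = O'.
Proof.
  intros HO HO'. apply (segment_eq_of_dist A B); [apply HO | apply HO' |].
  now rewrite (median_dist A B C O), (median_dist A B C O').
Qed.

Lemma median_inter_segments A B C O :
  median A B C O ->
  forall X, (segment d A B X /\ segment d A C X) <-> segment d A O X.
Proof.
  intros [OAB [OBC OAC]] X. split.
  - intros [XAB XAC]. apply (segment_ordered A B); auto.
    (* a common point beyond O would shortcut the path B - O - C *)
    pose proof (dist_triangle B X C).
    unfold segment in *. rewrite (dist_sym B X), (dist_sym B O) in *. lra.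
  - intros XAO. split; eapply segment_sub; eauto.
Qed.

Lemma medians_glue : (forall A B C : M, exists O, median A B C O) -> segments_glue.
Proof.
  intros Hmed A B C Hinter.
  destruct (Hmed A B C) as [O [OAB [OBC OAC]]].
  assert (B_on_AC : segment d A C B) by (rewrite <- (proj1 (Hinter O) (conj OAB OBC)); exact OAC).
  intros X. split; [apply segment_concat, B_on_AC | apply segment_split, B_on_AC].
Qed.

End MetricSegments.

Theorem theorem2p2 (M : Type) (d : M -> M -> R) :
  is_metric d -> inhabited M -> unique_segments d ->
  (is_R_tree d <-> conditionA d).
Proof.
  intros Hm Hi Hu. rewrite conditionA_iff_unique_medians by exact Hm. split.
  - intros [_ [_ [Hinter Hglue]]] A B C _ _ _.
    destruct (Hinter A B C) as [O HO].
    assert (HOmed : median M d A B C O) by now apply branch_point_median.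
    exists O. split; [exact HOmed |].
    intros O'. exact (median_unique M d Hm Hu A B C O O' HOmed).
  - intros Hmed.
    assert (Hex : forall A B C : M, exists O, median M d A B C O).
    { apply (medians_exist M d Hm). intros A B C nAB nBC nAC.
      destruct (Hmed A B C nAB nBC nAC) as [O [HO _]]. now exists O. }
    split; [exact Hi | split; [exact Hu | split]].
    + intros A B C. destruct (Hex A B C) as [O HO].
      exists O. now apply median_inter_segments.
    + now apply (medians_glue M d Hm Hu).
Qed.
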